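(* Let $A\in\mathbb{R}_+^{n\times n}$ be a circulant matrix. Then $\mathrm{Attr}(A)=\{x\in\mathbb{R}_+^n:\ \lambda(A)\,A^{n^2}\otimes x=A^{n^2+1}\otimes x\}$.
   Context: Max algebra on $\mathbb{R}_+$: $\oplus=\max$, ordinary product, $(A\otimes x)_i=\max_jA_{i,j}x_j$, $A^t$ max-algebraic power. $\lambda(A)$ is the greatest max-algebraic eigenvalue (maximum cycle geometric mean). $V(A,\lambda)=\{x: A\otimes x=\lambda x\}$ and $\mathrm{Attr}(A)=\{x\in\mathbb{R}_+^n:\ A^t\otimes x\in V(A,\lambda(A))\text{ for some }t\ge0\}$. $A$ is circulant if $A_{i,j}=a_t$ with $t\equiv j-i\pmod n$, $t\in\{0,\dots,n-1\}$, for some $a_0,\dots,a_{n-1}\ge0$. *)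

From Stdlib Require Import Reals List ListDec Arith.
Import ListNotations.
Open Scope R_scope.

(* n x n matrices and n-vectors are represented as functions on indices;
   only indices 0 .. n-1 are meaningful. *)
Definition mat := nat -> nat -> R.
Definition vec := nat -> R.

Definition nonneg_mat (n : nat) (A : mat) : Prop :=
  forall i j, (i < n)%nat -> (j < n)%nat -> 0 <= A i j.
Definition nonneg_vec (n : nat) (x : vec) : Prop :=
  forall i, (i < n)%nat -> 0 <= x i.

Definition circulant (n : nat) (A : mat) : Prop :=
  exists a : nat -> R, (forall t, (t < n)%nat -> 0 <= a t) /\
    forall i j, (i < n)%nat -> (j < n)%nat -> A i j = a ((j + n - i) mod n)%nat.

(* maximum of a finite family of nonnegative reals (empty max = 0) *)
Definition maxl (l : list R) : R := fold_right Rmax 0 l.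
Definition maxn_ (n : nat) (f : nat -> R) : R := maxl (map f (seq 0 n)).

Definition mvmul (n : nat) (A : mat) (x : vec) : vec :=
  fun i => maxn_ n (fun j => A i j * x j).
Definition mmul (n : nat) (A B : mat) : mat :=
  fun i j => maxn_ n (fun k => A i k * B k j).
Definition mid : mat := fun i j => if Nat.eqb i j then 1 else 0.
Fixpoint mpow (n : nat) (A : mat) (t : nat) : mat :=
  match t with
  | O => mid
  | S t' => mmul n A (mpow n A t')
  end.

Fixpoint words (n k : nat) : list (list nat) :=
  match k with
  | O => [[]]
  | S k' => flat_map (fun w => map (fun i => i :: w) (seq 0 n)) (words n k')
  end.
(* elementary cycles (i_0 -> i_1 -> ... -> i_{k-1} -> i_0), k >= 1,
   given by their vertex sequence with distinct vertices *)
Definition cycles (n k : nat) : list (list nat) :=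
  filter (fun w => if ListDec.NoDup_dec Nat.eq_dec w then true else false) (words n k).
Definition cycle_weight (A : mat) (k : nat) (w : list nat) : R :=
  fold_right Rmult 1
    (map (fun l => A (nth l w 0%nat) (nth ((l + 1) mod k) w 0%nat)) (seq 0 k)).
Definition root (k : nat) (w : R) : R :=
  if Rle_dec w 0 then 0 else Rpower w (/ INR k).
Definition lambda (n : nat) (A : mat) : R :=
  maxl (flat_map (fun k => map (fun w => root k (cycle_weight A k w)) (cycles n k))
                 (seq 1 n)).

Definition in_V (n : nat) (A : mat) (mu : R) (x : vec) : Prop :=
  forall i, (i < n)%nat -> mvmul n A x i = mu * x i.

Definition Attr (n : nat) (A : mat) (x : vec) : Prop :=
  nonneg_vec n x /\ exists t : nat, in_V n A (lambda n A) (mvmul n (mpow n A t) x).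

(* Write a_t for the circulant coefficients and M = a_s for the largest one.  The entry
   (A^k)_{ij} is the largest weight a_{t_1} ... a_{t_k} of a word of steps t_1 .. t_k with
   i + t_1 + ... + t_k = j (mod n).  By pigeonhole, a word of length at least n^2 contains a
   nonempty block whose length and step sum are both multiples of n; trading that block for
   copies of s gives A^(k+n) = M^n A^k as soon as k + n >= n^2.  Hence the orbit A^k x is
   geometric with ratio M^n from k = n^2 - n on.  If A^t x is an eigenvector for lambda(A),
   then A^(N+1) x = lambda(A) A^N x for N = n^2 + t n, and dividing by M^(t n) gives the claim;
   if M = 0 both sides vanish. *)

From Stdlib Require Import Reals List Arith Lia Lra Classical.
Open Scope R_scope.

Lemma maxl_ge0 (l : list R) : 0 <= maxl l.
Proof. induction l as [|x l IH]; simpl; [lra|]. eapply Rle_trans; [exact IH | apply Rmax_r]. Qed.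

Lemma maxl_ub (l : list R) (x : R) : In x l -> x <= maxl l.
Proof.
  induction l as [|y l IH]; simpl; [tauto|].
  intros [<- | Hx]; [apply Rmax_l | eapply Rle_trans; [apply IH, Hx | apply Rmax_r]].
Qed.

Lemma maxl_lub (l : list R) (c : R) : 0 <= c -> (forall x, In x l -> x <= c) -> maxl l <= c.
Proof. induction l as [|y l IH]; simpl; intros Hc Hl; [exact Hc|]. apply Rmax_lub; auto. Qed.

Lemma maxl_attained (l : list R) : maxl l = 0 \/ In (maxl l) l.
Proof.
  induction l as [|y l IH]; simpl; [now left|].
  destruct (Rle_dec y (maxl l)).
  - rewrite Rmax_right by lra. destruct IH; auto.
  - rewrite Rmax_left by lra. auto.
Qed.

Lemma maxn_ge0 (n : nat) (f : nat -> R) : 0 <= maxn_ n f.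
Proof. apply maxl_ge0. Qed.

Lemma maxn_ub (n : nat) (f : nat -> R) (j : nat) : (j < n)%nat -> f j <= maxn_ n f.
Proof. intros Hj. apply maxl_ub, in_map, in_seq. lia. Qed.

Lemma maxn_lub (n : nat) (f : nat -> R) (c : R) :
  0 <= c -> (forall j, (j < n)%nat -> f j <= c) -> maxn_ n f <= c.
Proof.
  intros Hc Hf. apply maxl_lub; [exact Hc|].
  intros x [j [<- Hj%in_seq]]%in_map_iff. apply Hf. lia.
Qed.

Lemma maxn_ext (n : nat) (f g : nat -> R) :
  (forall j, (j < n)%nat -> f j = g j) -> maxn_ n f = maxn_ n g.
Proof. intros Hfg. unfold maxn_. f_equal. apply map_ext_in. intros j Hj%in_seq. apply Hfg. lia. Qed.

Lemma maxn_cases (n : nat) (f : nat -> R) :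
  maxn_ n f = 0 \/ exists j, (j < n)%nat /\ maxn_ n f = f j.
Proof.
  destruct (maxl_attained (map f (seq 0 n))) as [H0 | [j [Hj Hin%in_seq]]%in_map_iff];
    [now left | right].
  exists j. split; [lia | now symmetry].
Qed.

Lemma maxn_attained (n : nat) (f : nat -> R) :
  (0 < n)%nat -> (forall j, (j < n)%nat -> 0 <= f j) ->
  exists j, (j < n)%nat /\ maxn_ n f = f j.
Proof.
  intros Hn Hf. destruct (maxn_cases n f) as [H0 | Hj]; [|exact Hj].
  exists 0%nat. split; [exact Hn|].
  apply Rle_antisym; [rewrite H0; auto | apply maxn_ub, Hn].
Qed.

Lemma maxn_mul_l (n : nat) (f : nat -> R) (c : R) :
  0 <= c -> c * maxn_ n f = maxn_ n (fun j => c * f j).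
Proof.
  intros Hc. apply Rle_antisym.
  - destruct (maxn_cases n f) as [-> | [j [Hj ->]]].
    + rewrite Rmult_0_r. apply maxn_ge0.
    + apply (maxn_ub n (fun j => c * f j)), Hj.
  - apply maxn_lub; [apply Rmult_le_pos; [exact Hc | apply maxn_ge0]|].
    intros j Hj. apply Rmult_le_compat_l; [exact Hc | apply maxn_ub, Hj].
Qed.

Lemma maxn_mul_r (n : nat) (f : nat -> R) (c : R) :
  0 <= c -> maxn_ n f * c = maxn_ n (fun j => f j * c).
Proof. intros Hc. rewrite Rmult_comm, maxn_mul_l by exact Hc. apply maxn_ext. intros; ring. Qed.

Lemma maxn_comm (n m : nat) (F : nat -> nat -> R) :
  maxn_ n (fun j => maxn_ m (F j)) = maxn_ m (fun k => maxn_ n (fun j => F j k)).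
Proof.
  apply Rle_antisym; apply maxn_lub; try apply maxn_ge0; intros j Hj;
    apply maxn_lub; try apply maxn_ge0; intros k Hk.
  - eapply Rle_trans; [|apply (maxn_ub m _ k Hk)]. apply (maxn_ub n (fun j => F j k) j Hj).
  - eapply Rle_trans; [|apply (maxn_ub n _ k Hk)]. apply (maxn_ub m (F k) j Hj).
Qed.

Lemma lambda_ge0 (n : nat) (A : mat) : 0 <= lambda n A.
Proof. apply maxl_ge0. Qed.

Lemma mvmul_ext (n : nat) (A : mat) (x y : vec) (i : nat) :
  (forall j, (j < n)%nat -> x j = y j) -> mvmul n A x i = mvmul n A y i.
Proof. intros Hxy. apply maxn_ext. intros j Hj. now rewrite Hxy. Qed.

Lemma mvmul_scal (n : nat) (A : mat) (x : vec) (c : R) (i : nat) :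
  0 <= c -> mvmul n A (fun j => c * x j) i = c * mvmul n A x i.
Proof. intros Hc. unfold mvmul. rewrite maxn_mul_l by exact Hc. apply maxn_ext. intros; ring. Qed.

Lemma mvmul_mmul (n : nat) (A B : mat) (x : vec) (i : nat) :
  nonneg_mat n A -> nonneg_vec n x -> (i < n)%nat ->
  mvmul n (mmul n A B) x i = mvmul n A (mvmul n B x) i.
Proof.
  intros HA Hx Hi. unfold mvmul, mmul.
  transitivity (maxn_ n (fun j => maxn_ n (fun k => A i k * B k j * x j))).
  { apply maxn_ext. intros j Hj. now apply maxn_mul_r, Hx. }
  rewrite maxn_comm. apply maxn_ext. intros k Hk.
  rewrite maxn_mul_l by now apply HA. apply maxn_ext. intros; ring.
Qed.

Lemma mvmul_mpow_succ (n : nat) (A : mat) (x : vec) (m i : nat) :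
  nonneg_mat n A -> nonneg_vec n x -> (i < n)%nat ->
  mvmul n (mpow n A (S m)) x i = mvmul n A (mvmul n (mpow n A m) x) i.
Proof. apply mvmul_mmul. Qed.

Lemma mpow_ge0 (n : nat) (A : mat) (k i j : nat) : 0 <= mpow n A k i j.
Proof. destruct k; simpl; [unfold mid; destruct (Nat.eqb i j); lra | apply maxn_ge0]. Qed.

Lemma in_V_mvmul (n : nat) (A : mat) (mu : R) (y : vec) :
  0 <= mu -> in_V n A mu y -> in_V n A mu (mvmul n A y).
Proof.
  intros Hmu Hy i Hi. rewrite (mvmul_ext n A _ (fun j => mu * y j)) by exact Hy.
  now apply mvmul_scal.
Qed.

Lemma in_V_mpow (n : nat) (A : mat) (mu : R) (x : vec) (t m : nat) :
  nonneg_mat n A -> nonneg_vec n x -> 0 <= mu -> (t <= m)%nat ->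
  in_V n A mu (mvmul n (mpow n A t) x) -> in_V n A mu (mvmul n (mpow n A m) x).
Proof.
  intros HA Hx Hmu Htm Ht. induction Htm as [|m _ IH]; [exact Ht|].
  intros i Hi. rewrite mvmul_mpow_succ by assumption.
  rewrite (mvmul_ext n A _ (mvmul n A (mvmul n (mpow n A m) x)))
    by (intros j Hj; now apply mvmul_mpow_succ).
  now apply in_V_mvmul.
Qed.

Lemma pigeonhole {X : Type} (f : nat -> X) (l : list X) (N : nat) :
  (forall p, (p <= N)%nat -> In (f p) l) -> (length l <= N)%nat ->
  exists p q, (p < q <= N)%nat /\ f p = f q.
Proof.
  intros Hf Hl. apply NNPP. intros Hinj.
  assert (Hnd : NoDup (map f (seq 0 (S N)))).
  { apply (NoDup_nth _ (f 0%nat)). rewrite length_map, length_seq.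
    intros p q Hp Hq. rewrite !map_nth, !seq_nth by assumption.
    intros E. destruct (Nat.lt_total p q) as [Hpq | [Hpq | Hpq]]; [|exact Hpq|];
      exfalso; apply Hinj; eauto with arith. }
  apply NoDup_incl_length with (l' := l) in Hnd.
  - rewrite length_map, length_seq in Hnd. lia.
  - intros y [p [<- Hp%in_seq]]%in_map_iff. apply Hf. lia.
Qed.

Lemma mod_eq_add_divide (n a b : nat) : (a mod n = (a + b) mod n)%nat -> Nat.divide n b.
Proof.
  intros E. exists ((a + b) / n - a / n)%nat.
  pose proof (Nat.Div0.div_mod a n). pose proof (Nat.Div0.div_mod (a + b) n).
  rewrite Nat.mul_sub_distr_r. nia.
Qed.

(* Pigeonhole on the pairs (sum of the first p letters mod n, p mod n) for p = 0 .. n^2. *)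
Lemma long_word_divisible_block (n : nat) (ts : list nat) :
  (0 < n)%nat -> (n * n <= length ts)%nat ->
  exists u v w, ts = u ++ v ++ w /\ (0 < length v)%nat /\
    Nat.divide n (length v) /\ Nat.divide n (list_sum v).
Proof.
  intros Hn Hlen.
  destruct (pigeonhole (fun p => (list_sum (firstn p ts) mod n, p mod n)%nat)
              (list_prod (seq 0 n) (seq 0 n)) (n * n)) as [p [q [Hpq E]]].
  { intros p _. pose proof (Nat.mod_upper_bound (list_sum (firstn p ts)) n).
    pose proof (Nat.mod_upper_bound p n). apply in_prod; apply in_seq; lia. }
  { rewrite length_prod, length_seq. lia. }
  injection E as Esum Epos.
  set (u := firstn p ts). set (v := firstn (q - p) (skipn p ts)).
  assert (Hu : length u = p) by (unfold u; rewrite length_firstn; lia).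
  assert (Hv : length v = (q - p)%nat) by (unfold v; rewrite length_firstn, length_skipn; lia).
  assert (Hq : firstn q ts = u ++ v).
  { unfold u, v. rewrite <- (firstn_skipn p ts) at 1.
    rewrite firstn_app, firstn_all2, length_firstn by (rewrite length_firstn; lia).
    do 2 f_equal. lia. }
  exists u, v, (skipn (q - p) (skipn p ts)). split; [|split; [|split]].
  - unfold u, v. now rewrite !firstn_skipn.
  - lia.
  - rewrite Hv. apply (mod_eq_add_divide n p). now replace (p + (q - p))%nat with q by lia.
  - apply (mod_eq_add_divide n (list_sum u)). now rewrite <- list_sum_app, <- Hq.
Qed.

Definition word_weight (a : nat -> R) (ts : list nat) : R := fold_right Rmult 1 (map a ts).

Lemma word_weight_app (a : nat -> R) (u v : list nat) :
  word_weight a (u ++ v) = word_weight a u * word_weight a v.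
Proof.
  unfold word_weight. rewrite map_app, fold_right_app.
  induction u as [|t u IH]; simpl; [ring|]. rewrite IH. ring.
Qed.

Lemma word_weight_repeat (a : nat -> R) (s m : nat) : word_weight a (repeat s m) = a s ^ m.
Proof.
  induction m as [|m IH]; simpl; [reflexivity|].
  unfold word_weight in *. simpl. now rewrite IH.
Qed.

Lemma list_sum_repeat (s m : nat) : list_sum (repeat s m) = (m * s)%nat.
Proof. induction m as [|m IH]; simpl; [reflexivity|]. rewrite IH. lia. Qed.

Lemma Forall_repeat {X : Type} (P : X -> Prop) (x : X) (m : nat) : P x -> Forall P (repeat x m).
Proof. intros Hx. apply Forall_forall. intros y Hy%repeat_spec. now subst. Qed.

Section Circulant.

Variables (n : nat) (A : mat) (a : nat -> R).
Hypothesis n_pos : (0 < n)%nat.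
Hypothesis a_ge0 : forall t, (t < n)%nat -> 0 <= a t.
Hypothesis A_circ : forall i j, (i < n)%nat -> (j < n)%nat -> A i j = a ((j + n - i) mod n)%nat.

Let step_ok (t : nat) : Prop := (t < n)%nat.

Lemma word_weight_ge0 (ts : list nat) : Forall step_ok ts -> 0 <= word_weight a ts.
Proof.
  induction 1 as [|t ts Ht _ IH]; unfold word_weight; simpl; [lra|].
  apply Rmult_le_pos; [now apply a_ge0 | exact IH].
Qed.

Lemma word_weight_le_pow (ts : list nat) (M : R) :
  (forall t, (t < n)%nat -> a t <= M) -> Forall step_ok ts -> word_weight a ts <= M ^ length ts.
Proof.
  intros HM. induction 1 as [|t ts Ht Hts IH]; unfold word_weight; simpl; [lra|].
  apply Rmult_le_compat; [now apply a_ge0 | now apply word_weight_ge0 | now apply HM | exact IH].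
Qed.

Lemma circ_index_shift (i t : nat) :
  (i < n)%nat -> (t < n)%nat -> (((i + t) mod n + n - i) mod n = t)%nat.
Proof.
  intros Hi Ht. replace ((i + t) mod n + n - i)%nat with ((i + t) mod n + (n - i))%nat by lia.
  rewrite Nat.Div0.add_mod_idemp_l. replace (i + t + (n - i))%nat with (t + 1 * n)%nat by lia.
  rewrite Nat.Div0.mod_add. now apply Nat.mod_small.
Qed.

Lemma circ_index_unshift (i j : nat) :
  (i < n)%nat -> (j < n)%nat -> ((i + (j + n - i) mod n) mod n = j)%nat.
Proof.
  intros Hi Hj. rewrite Nat.Div0.add_mod_idemp_r.
  replace (i + (j + n - i))%nat with (j + 1 * n)%nat by lia.
  rewrite Nat.Div0.mod_add. now apply Nat.mod_small.
Qed.

Lemma mpow_ge_word_weight (ts : list nat) (i : nat) :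
  Forall step_ok ts -> (i < n)%nat ->
  word_weight a ts <= mpow n A (length ts) i ((i + list_sum ts) mod n).
Proof.
  intros Hts. revert i. induction Hts as [|t ts Ht Hts IH]; intros i Hi; simpl.
  - unfold mid. rewrite Nat.add_0_r, Nat.mod_small, Nat.eqb_refl by exact Hi.
    unfold word_weight. simpl. lra.
  - set (k := ((i + t) mod n)%nat). assert (Hk : (k < n)%nat) by (apply Nat.mod_upper_bound; lia).
    eapply Rle_trans; [|apply (maxn_ub n (fun k => A i k * _) k Hk)]. simpl.
    assert (HAk : A i k = a t)
      by (rewrite A_circ by assumption; unfold k; now rewrite circ_index_shift).
    rewrite HAk.
    replace ((i + (t + list_sum ts)) mod n)%nat with ((k + list_sum ts) mod n)%nat
      by (unfold k; rewrite Nat.Div0.add_mod_idemp_l; f_equal; lia).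
    apply Rmult_le_compat_l; [now apply a_ge0 | now apply IH].
Qed.

Lemma mpow_le_word_weight (k i j : nat) :
  (i < n)%nat -> (j < n)%nat ->
  mpow n A k i j = 0 \/ exists ts, length ts = k /\ Forall step_ok ts /\
    j = ((i + list_sum ts) mod n)%nat /\ mpow n A k i j <= word_weight a ts.
Proof.
  revert i. induction k as [|k IH]; intros i Hi Hj; simpl; unfold mmul.
  - unfold mid. destruct (Nat.eqb_spec i j) as [<- | _]; [right | now left].
    exists nil. repeat split; simpl.
    + constructor.
    + rewrite Nat.add_0_r. symmetry. now apply Nat.mod_small.
    + unfold word_weight. simpl. lra.
  - destruct (maxn_attained n (fun m => A i m * mpow n A k m j)) as [m [Hm ->]]; [exact n_pos| |].
    { intros m Hm. rewrite A_circ by assumption.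
      apply Rmult_le_pos; [apply a_ge0, Nat.mod_upper_bound; lia | apply mpow_ge0]. }
    destruct (IH m Hm Hj) as [-> | [ts [Hlen [Hts [Hsum Hle]]]]]; [left; ring | right].
    set (t := ((m + n - i) mod n)%nat).
    assert (Ht : (t < n)%nat) by (apply Nat.mod_upper_bound; lia).
    exists (t :: ts). repeat split; simpl.
    + now rewrite Hlen.
    + now constructor.
    + rewrite Hsum, <- (circ_index_unshift i m) at 1 by assumption. fold t.
      rewrite Nat.Div0.add_mod_idemp_l. f_equal. lia.
    + rewrite A_circ by assumption. unfold word_weight. simpl.
      apply Rmult_le_compat_l; [now apply a_ge0 | exact Hle].
Qed.

Variable s : nat.
Hypothesis s_lt : (s < n)%nat.
Hypothesis a_le_s : forall t, (t < n)%nat -> a t <= a s.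

Lemma mpow_add_ge (k i j : nat) :
  (i < n)%nat -> (j < n)%nat -> a s ^ n * mpow n A k i j <= mpow n A (k + n) i j.
Proof.
  intros Hi Hj.
  destruct (mpow_le_word_weight k i j Hi Hj) as [-> | [ts [Hlen [Hts [Hsum Hle]]]]].
  { rewrite Rmult_0_r. apply mpow_ge0. }
  assert (Hlow : word_weight a (repeat s n ++ ts) <= mpow n A (k + n) i j).
  { replace (k + n)%nat with (length (repeat s n ++ ts))
      by (rewrite length_app, repeat_length; lia).
    replace j with ((i + list_sum (repeat s n ++ ts)) mod n)%nat.
    - apply mpow_ge_word_weight; [|exact Hi].
      apply Forall_app. split; [now apply Forall_repeat | exact Hts].
    - rewrite Hsum, list_sum_app, list_sum_repeat.
      replace (i + (n * s + list_sum ts))%nat with ((i + list_sum ts) + s * n)%nat by lia.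
      apply Nat.Div0.mod_add. }
  eapply Rle_trans; [|exact Hlow]. rewrite word_weight_app, word_weight_repeat.
  apply Rmult_le_compat_l; [apply pow_le, a_ge0, s_lt | exact Hle].
Qed.

(* The block v of [long_word_divisible_block] is traded for length v - n copies of s: the
   step sum stays the same mod n and the weight drops by at most a_s^n. *)
Lemma mpow_add_le (k i j : nat) :
  (i < n)%nat -> (j < n)%nat -> (n * n <= k + n)%nat ->
  mpow n A (k + n) i j <= a s ^ n * mpow n A k i j.
Proof.
  intros Hi Hj Hk. assert (Has : 0 <= a s) by now apply a_ge0.
  destruct (mpow_le_word_weight (k + n) i j Hi Hj) as [-> | [ts [Hlen [Hts [Hsum Hle]]]]].
  { apply Rmult_le_pos; [now apply pow_le | apply mpow_ge0]. }
  destruct (long_word_divisible_block n ts n_pos) as [u [v [w [-> [Hv [[c Hc] [d Hd]]]]]]]; [lia|].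
  apply Forall_app in Hts as [Hu Hts]. apply Forall_app in Hts as [Hv' Hw].
  set (ts' := u ++ repeat s (length v - n) ++ w).
  assert (Hn_v : (n <= length v)%nat) by (apply Nat.divide_pos_le; [exact Hv | now exists c]).
  assert (Hlen' : length ts' = k) by (unfold ts'; rewrite !length_app, repeat_length in *; lia).
  assert (Hsum' : j = ((i + list_sum ts') mod n)%nat).
  { rewrite Hsum. unfold ts'. rewrite !list_sum_app, list_sum_repeat, Hd, Hc.
    replace (c * n - n)%nat with ((c - 1) * n)%nat by (rewrite Nat.mul_sub_distr_r; lia).
    rewrite Nat.mul_shuffle0.
    replace (i + (list_sum u + (d * n + list_sum w)))%nat
      with ((i + list_sum u + list_sum w) + d * n)%nat by lia.
    replace (i + (list_sum u + ((c - 1) * s * n + list_sum w)))%nat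
      with ((i + list_sum u + list_sum w) + (c - 1) * s * n)%nat by lia.
    now rewrite !Nat.Div0.mod_add. }
  assert (Hlow : word_weight a ts' <= mpow n A k i j).
  { rewrite Hsum', <- Hlen'. apply mpow_ge_word_weight; [|exact Hi].
    apply Forall_app. split; [exact Hu|].
    apply Forall_app. split; [now apply Forall_repeat | exact Hw]. }
  eapply Rle_trans; [exact Hle|].
  eapply Rle_trans; [|apply Rmult_le_compat_l; [now apply pow_le | exact Hlow]].
  unfold ts'. rewrite !word_weight_app, word_weight_repeat.
  pose proof (word_weight_le_pow v (a s) a_le_s Hv') as Hvle.
  replace (length v) with (n + (length v - n))%nat in Hvle by lia. rewrite pow_add in Hvle.
  pose proof (word_weight_ge0 u Hu). pose proof (word_weight_ge0 w Hw).
  replace (a s ^ n * (word_weight a u * (a s ^ (length v - n) * word_weight a w)))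
    with (word_weight a u * (a s ^ n * a s ^ (length v - n)) * word_weight a w) by ring.
  rewrite <- Rmult_assoc. apply Rmult_le_compat_r; [assumption|]. now apply Rmult_le_compat_l.
Qed.

Lemma mpow_add_period (k i j : nat) :
  (i < n)%nat -> (j < n)%nat -> (n * n <= k + n)%nat ->
  mpow n A (k + n) i j = a s ^ n * mpow n A k i j.
Proof. intros Hi Hj Hk. apply Rle_antisym; [now apply mpow_add_le | now apply mpow_add_ge]. Qed.

Lemma mvmul_mpow_period (x : vec) (k q i : nat) :
  (i < n)%nat -> (n * n <= k + n)%nat ->
  mvmul n (mpow n A (k + q * n)) x i = a s ^ (q * n) * mvmul n (mpow n A k) x i.
Proof.
  intros Hi Hk. induction q as [|q IH].
  { rewrite Nat.add_0_r. simpl. ring. }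
  replace (k + S q * n)%nat with (k + q * n + n)%nat by lia.
  unfold mvmul at 1.
  rewrite (maxn_ext n _ (fun j => a s ^ n * (mpow n A (k + q * n) i j * x j)))
    by (intros j Hj; rewrite mpow_add_period by (assumption || lia); ring).
  rewrite <- maxn_mul_l by (apply pow_le, a_ge0, s_lt).
  change (maxn_ n _) with (mvmul n (mpow n A (k + q * n)) x i).
  rewrite IH. replace (S q * n)%nat with (n + q * n)%nat by lia. rewrite pow_add. ring.
Qed.

End Circulant.

Theorem proposition3 (n : nat) (A : mat) :
  nonneg_mat n A -> circulant n A ->
  forall x : vec,
    Attr n A x <->
    (nonneg_vec n x /\
     forall i, (i < n)%nat ->
       lambda n A * mvmul n (mpow n A (n * n)) x i =
       mvmul n (mpow n A (n * n + 1)) x i).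
Proof.
  intros HA [a [Ha HAa]] x. split.
  - intros [Hx [t Ht]]. split; [exact Hx|]. intros i Hi.
    assert (Hn : (0 < n)%nat) by lia. assert (Hnn : (n <= n * n)%nat) by nia.
    destruct (maxn_attained n a Hn Ha) as [s [Hs Hmax]].
    assert (Hle : forall t, (t < n)%nat -> a t <= a s)
      by (intros; rewrite <- Hmax; now apply maxn_ub).
    pose proof (fun k q => mvmul_mpow_period n A a Hn Ha HAa s Hs Hle x k q i Hi) as Hperiod.
    rewrite Nat.add_1_r. destruct (Req_dec (a s) 0) as [Hs0 | Hs0].
    + assert (Hzero : forall k, (n * n <= k)%nat -> mvmul n (mpow n A k) x i = 0).
      { intros k Hk. replace k with (k - n + 1 * n)%nat by lia.
        rewrite Hperiod, Hs0, pow_i by lia. ring. }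
      rewrite !Hzero by lia. ring.
    + apply (Rmult_eq_reg_l (a s ^ (t * n))); [|now apply pow_nonzero].
      assert (HV : in_V n A (lambda n A) (mvmul n (mpow n A (n * n + t * n)) x))
        by (apply (in_V_mpow n A _ x t); try assumption; [apply lambda_ge0 | nia]).
      rewrite <- (Hperiod (S (n * n)) t) by lia.
      replace (S (n * n) + t * n)%nat with (S (n * n + t * n)) by lia.
      rewrite mvmul_mpow_succ, HV, (Hperiod (n * n)%nat t) by (assumption || lia). ring.
  - intros [Hx Heq]. split; [exact Hx|]. exists (n * n)%nat. intros i Hi.
    rewrite <- mvmul_mpow_succ, <- Nat.add_1_r by assumption. symmetry. now apply Heq.
Qed.
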